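(* Let $T$ be a countable tree with root $o$, and let $Q=(q(x,y))$ be a stochastic matrix on $T$ with $q(x,y)>0$ iff $x=y^-$. Let $\lambda\in\mathbb{C}\setminus\{0\}$. The formula $$h(x)=\int_{\partial T}K_Q(x,\xi\mid\lambda)\,d\sigma(\xi)=\frac{\lambda^{|x|}}{q^{(|x|)}(o,x)}\,\sigma(\partial T_x),\qquad x\in T,$$ gives a one-to-one correspondence $\sigma\mapsto h$ between complex distributions $\sigma$ on $\{\partial T_x:x\in T\}$ and $\lambda$-harmonic functions $h$ for $Q$, i.e. functions $h:T\to\mathbb{C}$ with $\sum_{y:\,y^-=x}q(x,y)h(y)=\lambda h(x)$ for all $x$, the sum converging absolutely.
   Context: $|x|=d(o,x)$. For $x\ne o$, $x^-$ is the neighbour of $x$ closer to $o$. $T_x=\{w:x\in\pi(o,w)\}$, where $\pi$ denotes geodesics, with $T_o=T$. $\partial T$ is the set of ends (classes of geodesic rays modulo finite initial segments), and $\partial T_x$ is the set of ends with a representative ray in $T_x$. For $\pi(o,x)=[o=x_0,\dots,x_n=x]$, $q^{(n)}(o,x)=q(x_0,x_1)\cdots q(x_{n-1},x_n)$, with $q^{(0)}(o,o)=1$. $K_Q(x,\xi\mid\lambda)=\lambda^{|x|}/q^{(|x|)}(o,x)$ if $x$ lies on the ray $\pi(o,\xi)$, and $0$ otherwise. A complex distribution is $\sigma:\{\partial T_x\}\to\mathbb{C}$ with $\sigma(\partial T_x)=\sum_{y^-=x}\sigma(\partial T_y)$ for all $x$, absolutely convergent. The integral of a function constant on $\partial T_x$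 and $0$ off $\partial T_x$ is that constant times $\sigma(\partial T_x)$. *)

From HB Require Import structures.
From mathcomp Require Import all_boot all_order all_algebra.
From mathcomp Require Import complex.
From mathcomp Require Import all_classical all_reals topology normedtype sequences.
Set Implicit Arguments. Unset Strict Implicit. Unset Printing Implicit Defensive.
Import Order.TTheory GRing.Theory Num.Theory numFieldNormedType.Exports.
Local Open Scope classical_set_scope.
Local Open Scope ring_scope.

(* A rooted tree on a countable vertex type V: root o and parent map x |-> x^-
   (the value parent o is irrelevant; o has no parent).  Every vertex reaches
   the root by iterating the parent map, so the graph with edges {y, y^-},
   y <> o, is a tree rooted at o; every rooted tree arises this way. *)
Record rooted_tree (V : countType) := RootedTree {
  root : V;
  parent : V -> V;
  parent_reach : forall x : V, exists n, iter n parent x == root }.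

Definition depth (V : countType) (T : rooted_tree V) (x : V) : nat :=
  ex_minn (parent_reach T x).

Definition is_child (V : countType) (T : rooted_tree V) (x y : V) : bool :=
  (y != root T) && (parent T y == x).

(* q^{(|x|)}(o,x) = q(x_0,x_1) ... q(x_{n-1},x_n) along pi(o,x) *)
Definition qpath (V : countType) (R : numDomainType) (T : rooted_tree V)
    (q : V -> V -> R) (x : V) : R :=
  \prod_(i < depth T x) q (iter i.+1 (parent T) x) (iter i (parent T) x).

(* Sums over a countable set A \subseteq V, via the enumeration of V given by
   pickle_inv (each vertex occurs exactly once). *)
Definition cterm (V : countType) (K : zmodType) (A : pred V) (f : V -> K)
    (n : nat) : K :=
  if @pickle_inv V n is Some x then (if A x then f x else 0) else 0.

Definition abs_summable (V : countType) (K : numFieldType) (A : pred V)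
    (f : V -> K) : Prop :=
  cvgn (series (fun n => `|cterm A f n|)).

(* value of \sum_{x in A} f x (independent of the order when absolutely
   convergent) *)
Definition csum (V : countType) (K : numFieldType) (A : pred V)
    (f : V -> K) : K :=
  limn (series (cterm A f)).

Definition tree_stochastic (V : countType) (R : realType) (T : rooted_tree V)
    (q : V -> V -> R) : Prop :=
  (forall x y, 0 <= q x y) /\
  (forall x, series (cterm predT (q x)) @ \oo --> (1 : R)) /\
  (forall x y, 0 < q x y <-> is_child T x y).

(* complex distribution, identified with the function x |-> sigma(dT_x) *)
Definition complex_distribution (V : countType) (R : realType)
    (T : rooted_tree V) (sigma : V -> R[i]) : Prop :=
  forall x, abs_summable (is_child T x) sigma /\
            sigma x = csum (is_child T x) sigma.

Definition lambda_harmonic (V : countType) (R : realType) (T : rooted_tree V)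
    (q : V -> V -> R) (lambda : R[i]) (h : V -> R[i]) : Prop :=
  forall x, abs_summable (is_child T x) (fun y => ((q x y)%:C)%C * h y) /\
            csum (is_child T x) (fun y => ((q x y)%:C)%C * h y) = lambda * h x.

(* K_Q(x,xi|lambda) = lambda^|x| / q^{(|x|)}(o,x) on dT_x, so that
   int K_Q(x,.|lambda) dsigma = lambda^|x| / q^{(|x|)}(o,x) * sigma(dT_x) *)
Definition poisson_transform (V : countType) (R : realType) (T : rooted_tree V)
    (q : V -> V -> R) (lambda : R[i]) (sigma : V -> R[i]) : V -> R[i] :=
  fun x => lambda ^+ depth T x / ((qpath T q x)%:C)%C * sigma x.

From HB Require Import structures.
From mathcomp Require Import all_boot all_order all_algebra.
From mathcomp Require Import complex.
From mathcomp Require Import all_classical all_reals topology normedtype sequences.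
Set Implicit Arguments. Unset Strict Implicit. Unset Printing Implicit Defensive.
Import Order.TTheory GRing.Theory Num.Theory numFieldNormedType.Exports.
Local Open Scope classical_set_scope.
Local Open Scope ring_scope.

(* The Poisson transform multiplies sigma pointwise by the weight
   w(x) = lambda^|x| / q^(|x|)(o,x), which never vanishes and satisfies
   q(x,y) w(y) = lambda w(x) for every child y of x.  Hence the harmonicity sum
   of w sigma at x is lambda w(x) times the sum of sigma over the children of x:
   w sigma is lambda-harmonic exactly when sigma is a distribution, and
   sigma = h / w inverts the transform. *)

Section CountableSums.
Variables (V : countType) (K : numFieldType) (A : pred V).
Implicit Types (f g : V -> K) (c : K).

Lemma eq_cterm f g : {in A, f =1 g} -> cterm A f = cterm A g.
Proof.
move=> fg; apply: funext => n; rewrite /cterm.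
by case: (pickle_inv n) => // x; case: ifP => // /fg ->.
Qed.

Lemma eq_abs_summable f g :
  {in A, f =1 g} -> abs_summable A f <-> abs_summable A g.
Proof. by move=> /eq_cterm fg; rewrite /abs_summable fg. Qed.

Lemma eq_csum f g : {in A, f =1 g} -> csum A f = csum A g.
Proof. by move=> /eq_cterm fg; rewrite /csum fg. Qed.

Lemma ctermZ c f : cterm A (fun y => c * f y) = c *: cterm A f.
Proof.
apply: funext => n; rewrite /cterm /GRing.scale /=.
by case: (pickle_inv n) => [x|]; [case: (A x)|]; rewrite ?scaler0.
Qed.

Lemma abs_summableZ c f :
  c != 0 -> abs_summable A (fun y => c * f y) <-> abs_summable A f.
Proof.
move=> c0; rewrite /abs_summable ctermZ.
have -> : (fun n => `|(c *: cterm A f) n|) = `|c| *: (fun n => `|cterm A f n|).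
  by apply: funext => n; rewrite /= normrM.
by rewrite seriesZ is_cvgZlE ?normr_eq0.
Qed.

Lemma csumZ c f : c != 0 -> csum A (fun y => c * f y) = c * csum A f.
Proof.
move=> c0; rewrite /csum ctermZ seriesZ.
have [cvg_f|dvg_f] := pselect (cvgn (series (cterm A f))).
  by rewrite limZl_tmp.
have dvg_cf : ~ cvgn (c *: series (cterm A f)) by rewrite is_cvgZlE.
by rewrite (dvgP dvg_f) (dvgP dvg_cf) mulr0.
Qed.

End CountableSums.

Section RootedTree.
Variables (V : countType) (T : rooted_tree V).

Lemma depth_child x y : is_child T x y -> depth T y = (depth T x).+1.
Proof.
case/andP=> y_neq_o /eqP yx; rewrite /depth.
case: ex_minnP => m reach_y min_y; case: ex_minnP => n reach_x min_x.
apply/eqP; rewrite eqn_leq min_y ?iterSr ?yx //.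
case: m reach_y {min_y} => [|m]; first by rewrite /= (negbTE y_neq_o).
by rewrite iterSr yx ltnS => /min_x.
Qed.

Lemma is_child_iter x i :
  (i < depth T x)%N -> is_child T (iter i.+1 (parent T) x) (iter i (parent T) x).
Proof.
rewrite /depth; case: ex_minnP => m _ min_x lt_im.
rewrite /is_child iterS eqxx andbT; apply/negP => /min_x.
by rewrite leqNgt lt_im.
Qed.

Variables (R : realType) (q : V -> V -> R).

Lemma qpath_child x y : is_child T x y -> qpath T q y = q x y * qpath T q x.
Proof.
move=> xy; have /andP[_ /eqP yx] := xy.
rewrite /qpath (depth_child xy) big_ord_recl /= yx; congr (_ * _).
by apply: eq_bigr => i _; rewrite -!iterS !iterSr yx.
Qed.

Hypothesis q_pos : forall x y, 0 < q x y <-> is_child T x y.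

Lemma qpath_gt0 x : 0 < qpath T q x.
Proof. by apply: prodr_gt0 => i _; apply/q_pos/is_child_iter. Qed.

End RootedTree.

Section ScaledHarmonic.
Variables (V : countType) (T : rooted_tree V) (R : realType).
Variables (q : V -> V -> R) (lambda : R[i]) (w : V -> R[i]).
Hypotheses (lambda_neq0 : lambda != 0) (w_neq0 : forall x, w x != 0).
Hypothesis w_child : forall x y, is_child T x y -> (q x y)%:C%C * w y = lambda * w x.

Lemma lambda_harmonic_scaleE (sigma : V -> R[i]) :
  lambda_harmonic T q lambda (fun x => w x * sigma x) <-> complex_distribution T sigma.
Proof.
have c_neq0 x : lambda * w x != 0 by rewrite mulf_neq0.
have summand x : {in is_child T x,
    (fun y => lambda * w x * sigma y) =1 (fun y => (q x y)%:C%C * (w y * sigma y))}.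
  by move=> y /w_child xy; rewrite mulrA xy.
split=> harm x; have [summable_x eq_x] := harm x; split.
- exact/(abs_summableZ _ _ (c_neq0 x)).1/(eq_abs_summable (summand x)).2.
- by apply: (mulfI (c_neq0 x)); rewrite -csumZ // (eq_csum (summand x)) eq_x mulrA.
- exact/(eq_abs_summable (summand x)).1/(abs_summableZ _ _ (c_neq0 x)).2.
- by rewrite -(eq_csum (summand x)) csumZ // -eq_x mulrA.
Qed.

End ScaledHarmonic.

Definition poisson_weight (V : countType) (R : realType) (T : rooted_tree V)
    (q : V -> V -> R) (lambda : R[i]) (x : V) : R[i] :=
  lambda ^+ depth T x / (qpath T q x)%:C%C.

Section PoissonWeight.
Variables (V : countType) (T : rooted_tree V) (R : realType).
Variables (q : V -> V -> R) (lambda : R[i]).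
Hypothesis q_pos : forall x y, 0 < q x y <-> is_child T x y.

Lemma poisson_weight_neq0 x : lambda != 0 -> poisson_weight T q lambda x != 0.
Proof.
move=> lambda_neq0; rewrite mulf_neq0 ?expf_neq0 // invr_eq0 fmorph_eq0.
by rewrite gt_eqF // qpath_gt0.
Qed.

Lemma poisson_weight_child x y : is_child T x y ->
  (q x y)%:C%C * poisson_weight T q lambda y = lambda * poisson_weight T q lambda x.
Proof.
move=> xy; rewrite /poisson_weight (depth_child xy) (qpath_child q xy) rmorphM exprS /=.
have qxy_neq0 : (q x y)%:C%C != 0 :> R[i] by rewrite fmorph_eq0 gt_eqF //; apply/q_pos.
by rewrite invfM mulrCA !mulrA mulfK.
Qed.

End PoissonWeight.

Theorem lemma6p1 (R : realType) (V : countType) (T : rooted_tree V)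
    (q : V -> V -> R) (lambda : R[i]) :
  tree_stochastic T q -> lambda != 0 ->
  (forall sigma : V -> R[i], complex_distribution T sigma ->
     lambda_harmonic T q lambda (poisson_transform T q lambda sigma)) /\
  (forall h : V -> R[i], lambda_harmonic T q lambda h ->
     exists! sigma : V -> R[i],
       complex_distribution T sigma /\ h = poisson_transform T q lambda sigma).
Proof.
move=> [_ [_ q_pos]] lambda_neq0.
pose w := poisson_weight T q lambda.
have w_neq0 x : w x != 0 by exact: poisson_weight_neq0.
have harmonicE := lambda_harmonic_scaleE lambda_neq0 w_neq0 (poisson_weight_child lambda q_pos).
split=> [sigma sigma_distr|h h_harm].
  exact: (harmonicE sigma).2.
pose sigma x := (w x)^-1 * h x.
have h_eq : h = poisson_transform T q lambda sigma.
  by apply: funext => x; exact/esym/(mulVKf (w_neq0 x)).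
exists sigma; split.
  by split=> //; rewrite h_eq in h_harm; exact: (harmonicE sigma).1.
move=> s [_ h_s]; apply: funext => x.
by rewrite /sigma h_s; exact: (mulKf (w_neq0 x)).
Qed.
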